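(* Let $f \colon \mathbb{R} \to \mathbb{R}$ be given by $f(x) = \ln\big(\frac{\sinh x}{x}\big) - \frac{x^2}{6}$ for $x \neq 0$ and $f(0) = 0$. Then $f$ is continuous on $\mathbb{R}$, is even, and is strictly decreasing on $[0,+\infty)$. Consequently, the mapping $[0,+\infty) \ni x \mapsto x f(x)$ is subadditive, i.e. $(x+y)f(x+y) \le x f(x) + y f(y)$ for all $x,y \ge 0$. *)

From Stdlib Require Import Reals.
Open Scope R_scope.

Definition f_lnsinh (x : R) : R :=
  if Req_EM_T x 0 then 0 else ln (sinh x / x) - x ^ 2 / 6.

(** With [sinhc x = sinh x / x] (and [sinhc 0 = 1]) we have
    [f = ln ∘ sinhc - x^2/6] everywhere, so [f] is continuous and even because
    [sinhc] is.  For [x > 0],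
      [f'(x) = - ((3 + x^2) sinh x - 3 x cosh x) / (3 x sinh x)],
    and the numerator is positive: it vanishes at [0] and its derivative is
    [x (x cosh x - sinh x)], whose second factor again vanishes at [0] and has
    derivative [x sinh x > 0].  Finally, if [f] is nonincreasing on [[0, +oo)]
    then [(x + y) f(x + y) = x f(x + y) + y f(x + y) <= x f(x) + y f(y)]. *)

From Stdlib Require Import Reals Lra Psatz.
From Coquelicot Require Import Coquelicot.
Open Scope R_scope.

Lemma strictly_increasing_of_derive_pos (g g' : R -> R) (a b : R) :
  a < b ->
  (forall c, a <= c <= b -> continuity_pt g c) ->
  (forall c, a < c < b -> is_derive g c (g' c)) ->
  (forall c, a < c < b -> 0 < g' c) ->
  g a < g b.
Proof.
  intros Hab Hcont Hder Hpos.
  (* [MVT_gen] may return an endpoint, where [g'] is unconstrained. *)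
  set (dg c := if Rlt_dec a c then if Rlt_dec c b then g' c else 1 else 1).
  assert (Hdg : forall c, 0 < dg c).
  { intros c; unfold dg. destruct (Rlt_dec a c), (Rlt_dec c b); auto; lra. }
  destruct (MVT_gen g a b dg) as (c & _ & Hmvt);
    rewrite ?Rmin_left, ?Rmax_right by lra.
  - intros c Hc. unfold dg. destruct (Rlt_dec a c), (Rlt_dec c b); auto; lra.
  - exact Hcont.
  - specialize (Hdg c). nra.
Qed.

Lemma pos_of_derive_pos (g g' : R -> R) :
  g 0 = 0 ->
  (forall c, is_derive g c (g' c)) ->
  (forall c, 0 < c -> 0 < g' c) ->
  forall t, 0 < t -> 0 < g t.
Proof.
  intros Hg0 Hder Hpos t Ht. rewrite <- Hg0.
  apply (strictly_increasing_of_derive_pos g g'); auto.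
  - intros c _. apply derivable_continuous_pt.
    exists (g' c). apply is_derive_Reals, Hder.
  - intros c Hc. apply Hpos. lra.
Qed.

Lemma mul_id_subadditive_of_nonincreasing (phi : R -> R) :
  (forall x y, 0 <= x -> x <= y -> phi y <= phi x) ->
  forall x y, 0 <= x -> 0 <= y ->
    (x + y) * phi (x + y) <= x * phi x + y * phi y.
Proof.
  intros Hdecr x y Hx Hy.
  assert (phi (x + y) <= phi x) by (apply Hdecr; lra).
  assert (phi (x + y) <= phi y) by (apply Hdecr; lra).
  nra.
Qed.

Lemma sinh_pos (x : R) : 0 < x -> 0 < sinh x.
Proof. intros Hx. rewrite <- sinh_0. apply sinh_lt, Hx. Qed.

Lemma sinh_opp (x : R) : sinh (- x) = - sinh x.
Proof. unfold sinh. rewrite Ropp_involutive. field. Qed.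

Lemma sinh_lt_mul_cosh (t : R) : 0 < t -> sinh t < t * cosh t.
Proof.
  intros Ht.
  enough (0 < t * cosh t - sinh t) by lra.
  apply (pos_of_derive_pos (fun t => t * cosh t - sinh t) (fun c => c * sinh c));
    auto.
  - rewrite sinh_0, cosh_0. ring.
  - intros c. unfold cosh, sinh. auto_derive; [exact I | field].
  - intros c Hc. apply Rmult_lt_0_compat; [exact Hc | apply sinh_pos, Hc].
Qed.

Lemma three_mul_cosh_lt (t : R) : 0 < t -> 3 * t * cosh t < (3 + t ^ 2) * sinh t.
Proof.
  intros Ht.
  enough (0 < (3 + t ^ 2) * sinh t - 3 * t * cosh t) by lra.
  apply (pos_of_derive_pos (fun t => (3 + t ^ 2) * sinh t - 3 * t * cosh t)
           (fun c => c * (c * cosh c - sinh c))); auto.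
  - rewrite sinh_0, cosh_0. ring.
  - intros c. unfold cosh, sinh. auto_derive; [exact I | field].
  - intros c Hc. apply Rmult_lt_0_compat; [exact Hc|].
    pose proof (sinh_lt_mul_cosh c Hc). lra.
Qed.

Definition sinhc (x : R) : R := if Req_EM_T x 0 then 1 else sinh x / x.

Lemma sinhc_pos (x : R) : 0 < sinhc x.
Proof.
  unfold sinhc. destruct (Req_EM_T x 0) as [_|Hx]; [lra|].
  destruct (Rlt_or_le 0 x).
  - apply Rdiv_lt_0_compat; [apply sinh_pos|]; lra.
  - replace (sinh x / x) with (sinh (- x) / - x) by (rewrite sinh_opp; field; exact Hx).
    apply Rdiv_lt_0_compat; [apply sinh_pos|]; lra.
Qed.

Lemma sinhc_opp (x : R) : sinhc (- x) = sinhc x.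
Proof.
  unfold sinhc.
  destruct (Req_EM_T (- x) 0), (Req_EM_T x 0) as [|Hx]; try lra.
  rewrite sinh_opp. field. exact Hx.
Qed.

Lemma continuity_pt_sinhc (x : R) : continuity_pt sinhc x.
Proof.
  destruct (Req_EM_T x 0) as [->|Hx].
  - (* at [0] this is the derivative [cosh 0 = 1] of [sinh] *)
    intros eps Heps. destruct (derivable_pt_lim_sinh 0 eps Heps) as [d Hd].
    exists d. split; [apply cond_pos|].
    intros y [[_ Hy0] Hyd]. simpl in *. unfold R_dist in *.
    rewrite Rminus_0_r in Hyd.
    specialize (Hd y (not_eq_sym Hy0) Hyd).
    rewrite Rplus_0_l, sinh_0, cosh_0, Rminus_0_r in Hd.
    unfold sinhc. destruct (Req_EM_T y 0), (Req_EM_T 0 0); lra.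
  - apply (continuity_pt_locally_ext (fun y => sinh y / y) _ (Rabs x)).
    + now apply Rabs_pos_lt.
    + intros y Hy. unfold sinhc. destruct (Req_EM_T y 0) as [->|]; [|reflexivity].
      unfold Rdist in Hy. rewrite Rminus_0_l, Rabs_Ropp in Hy. lra.
    + apply continuity_pt_filterlim, (ex_derive_continuous (fun y => sinh y / y)).
      unfold sinh. auto_derive. exact Hx.
Qed.

Lemma f_lnsinh_sinhc (x : R) : f_lnsinh x = ln (sinhc x) - x ^ 2 / 6.
Proof.
  unfold f_lnsinh, sinhc. destruct (Req_EM_T x 0) as [->|]; [|reflexivity].
  rewrite ln_1. field.
Qed.

Lemma continuity_pt_f_lnsinh (x : R) : continuity_pt f_lnsinh x.
Proof.
  apply (continuity_pt_ext (fun x => ln (sinhc x) - x ^ 2 / 6)).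
  { intros y. symmetry. apply f_lnsinh_sinhc. }
  apply (continuity_pt_minus (comp ln sinhc) (fun y => y ^ 2 / 6)).
  - apply continuity_pt_comp; [apply continuity_pt_sinhc|].
    apply continuity_pt_filterlim, continuous_ln, sinhc_pos.
  - reg.
Qed.

Lemma f_lnsinh_opp (x : R) : f_lnsinh (- x) = f_lnsinh x.
Proof. rewrite !f_lnsinh_sinhc, sinhc_opp. f_equal. f_equal. ring. Qed.

Lemma is_derive_f_lnsinh (c : R) : 0 < c ->
  is_derive f_lnsinh c
    (- (((3 + c ^ 2) * sinh c - 3 * c * cosh c) / (3 * c * sinh c))).
Proof.
  intros Hc.
  apply (is_derive_ext_loc (fun y => ln (sinh y / y) - y ^ 2 / 6)).
  { apply (filter_imp (fun y => 0 < y)); [|exact (open_gt 0 c Hc)].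
    intros y Hy. unfold f_lnsinh. destruct (Req_EM_T y 0); [lra | reflexivity]. }
  pose proof (sinh_pos c Hc) as Hs. unfold cosh, sinh in *.
  auto_derive.
  - repeat split; [lra | apply Rdiv_lt_0_compat; lra].
  - field. lra.
Qed.

Lemma f_lnsinh_decreasing (x y : R) : 0 <= x -> x < y -> f_lnsinh y < f_lnsinh x.
Proof.
  intros Hx Hxy.
  enough (- f_lnsinh x < - f_lnsinh y) by lra.
  apply (strictly_increasing_of_derive_pos (fun t => - f_lnsinh t)
    (fun c => - - (((3 + c ^ 2) * sinh c - 3 * c * cosh c) / (3 * c * sinh c))));
    [exact Hxy | | |].
  - intros c _. apply continuity_pt_opp, continuity_pt_f_lnsinh.
  - intros c Hc. apply (is_derive_opp f_lnsinh), is_derive_f_lnsinh. lra.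
  - intros c Hc. rewrite Ropp_involutive.
    pose proof (three_mul_cosh_lt c ltac:(lra)).
    pose proof (sinh_pos c ltac:(lra)).
    apply Rdiv_lt_0_compat; [lra|].
    apply Rmult_lt_0_compat; lra.
Qed.

Theorem mainTheorem2 :
  (forall x : R, continuity_pt f_lnsinh x) /\
  (forall x : R, f_lnsinh (- x) = f_lnsinh x) /\
  (forall x y : R, 0 <= x -> x < y -> f_lnsinh y < f_lnsinh x) /\
  (forall x y : R, 0 <= x -> 0 <= y ->
     (x + y) * f_lnsinh (x + y) <= x * f_lnsinh x + y * f_lnsinh y).
Proof.
  split; [exact continuity_pt_f_lnsinh|].
  split; [exact f_lnsinh_opp|].
  split; [exact f_lnsinh_decreasing|].
  apply mul_id_subadditive_of_nonincreasing.
  intros x y Hx Hxy. destruct (Rle_lt_or_eq_dec x y Hxy) as [Hlt | ->].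
  - left. exact (f_lnsinh_decreasing x y Hx Hlt).
  - right. reflexivity.
Qed.
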